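(* For every integer $d\ge 1$ there is a finite graph which is not a $d$-sphere graph; equivalently, there is a finite graph of sphere dimension greater than $d$.
   Context: Let $\mathbb{D}^d=\{x\in\mathbb{R}^{d+1}: |x|\le 1\}$ and $\mathcal{H}_d=\{\mathbb{D}^d\cap H: H \text{ a hyperplane of } \mathbb{R}^{d+1}\text{ meeting the interior of }\mathbb{D}^d\}$. A $d$-sphere graph is an intersection graph of a subfamily of $\mathcal{H}_d$. For $d\ge 2$ these are exactly the intersection graphs of families of spheres in $\mathbb{R}^d$; for $d=1$ they are the circle graphs. The sphere dimension of a graph is the least $d$ such that it is a $d$-sphere graph. *)

From HB Require Import structures.
From mathcomp Require Import all_boot all_order all_algebra.
From Stdlib Require Import Reals.
From mathcomp Require Import Rstruct.
Set Implicit Arguments. Unset Strict Implicit. Unset Printing Implicit Defensive.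
Import Order.TTheory GRing.Theory Num.Theory.
Local Open Scope ring_scope.

Definition point (d : nat) := 'I_d.+1 -> Rdefinitions.R.

Definition dotp (d : nat) (a x : point d) : Rdefinitions.R := \sum_(i < d.+1) a i * x i.

Definition in_disk (d : nat) (x : point d) : Prop := dotp x x <= 1.

Definition in_Hd (d : nat) (S : point d -> Prop) : Prop :=
  exists (a : point d) (b : Rdefinitions.R),
    (exists i, a i <> 0) /\
    (exists x : point d, dotp x x < 1 /\ dotp a x = b) /\
    (forall x : point d, S x <-> (in_disk x /\ dotp a x = b)).

(* A finite simple graph (V, e) is a d-sphere graph: it is the intersection
   graph of a subfamily of H_d, i.e. there is an injective assignment of
   members of H_d to vertices such that distinct vertices are adjacent iff
   their sets intersect. *)
Definition sphere_graph (d : nat) (V : finType) (e : rel V) : Prop :=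
  exists f : V -> (point d -> Prop),
    (forall v, in_Hd (f v)) /\ injective f /\
    (forall u v, u != v -> (e u v <-> exists x, f u x /\ f v x)).

(* Two hyperplane slices {a.x = b} and {c.x = b'} of the ball meet iff an
   explicit polynomial [meet_disc a b c b'] is nonpositive, and this polynomial
   is a sum of N = O(d^2) products [featL a b t * featR c b' t].  Hence in a
   d-sphere graph the adjacency between two classes of vertices is the sign
   pattern of a bilinear form of rank at most N.  The incidence graph between
   k = N + 1 points and all sets of these points is not of this form: a linear
   dependence mu between the k left feature vectors, with S the set of indices
   where mu is nonpositive, makes sum_i mu_i <featL_i, featR_S> vanish although
   every term is nonnegative and some term is positive. *)
From Stdlib Require Import Reals.
From mathcomp Require Import all_boot all_order all_algebra.
From mathcomp Require Import Rstruct.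
From mathcomp Require Import ring lra.
Set Implicit Arguments. Unset Strict Implicit. Unset Printing Implicit Defensive.
Import Order.TTheory GRing.Theory Num.Theory.
Local Open Scope ring_scope.

Lemma left_kernel_pos (F : realFieldType) k n (U : 'M[F]_(k, n)) :
  (n < k)%N -> exists2 mu : 'rV_k, mu *m U = 0 & exists j, 0 < mu 0 j.
Proof.
move=> lt_nk; have : kermx U != 0.
  by rewrite kermx_eq0 /row_free neq_ltn (leq_ltn_trans (rank_leq_col U)).
case/rowV0Pn => v /sub_kermxP vU0 /rV0Pn [j].
rewrite neq_lt => /orP[vj_lt0|vj_gt0]; last by exists v; last exists j.
exists (- v); first by rewrite mulNmx vU0 oppr0.
by exists j; rewrite mxE oppr_gt0.
Qed.

Lemma halfspaces_not_shattering (F : realFieldType) k n (U : 'M[F]_(k, n)) :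
  (n < k)%N ->
  exists S : {set 'I_k}, forall w : 'cV_n,
    ~ (forall i, (i \in S) = ((U *m w) i 0 <= 0)).
Proof.
move=> /(left_kernel_pos U) [mu muU0 [j mu_j_gt0]].
exists [set i | mu 0 i <= 0] => w hw.
have term_ge0 i : 0 <= mu 0 i * (U *m w) i 0.
  have := hw i; rewrite inE.
  have [mu_i_le0 /esym Uw_le0|mu_i_gt0 /esym/negbT] := leP (mu 0 i) 0.
    exact: mulr_le0.
  by rewrite -ltNge => /ltW; exact/mulr_ge0/ltW.
have term_j_gt0 : 0 < mu 0 j * (U *m w) j 0.
  by rewrite pmulr_rgt0 // ltNge -(hw j) inE -ltNge.
have : (mu *m (U *m w)) 0 0 = 0 by rewrite mulmxA muU0 mul0mx mxE.
rewrite mxE (bigD1 j) //=.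
have : 0 <= \sum_(i | i != j) mu 0 i * (U *m w) i 0 by exact: sumr_ge0.
lra.
Qed.

Section Slices.
Variable d : nat.
Implicit Types (a c x y : point d) (b s t : R).

Definition comb2 s x t y : point d := fun i => s * x i + t * y i.
Arguments comb2 s%_ring_scope x t%_ring_scope y.

Lemma dotpC x y : dotp x y = dotp y x.
Proof. by apply: eq_bigr => i _; rewrite mulrC. Qed.

Lemma dotp_comb2r a s x t y :
  dotp a (comb2 s x t y) = s * dotp a x + t * dotp a y.
Proof.
rewrite /dotp /comb2 !mulr_sumr -big_split /=; apply: eq_bigr => i _; ring.
Qed.

Lemma dotp_comb2l a s x t y :
  dotp (comb2 s x t y) a = s * dotp x a + t * dotp y a.
Proof. by rewrite dotpC dotp_comb2r (dotpC a x) (dotpC a y). Qed.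

Lemma dotp_comb2 s x t y :
  dotp (comb2 s x t y) (comb2 s x t y) =
  s ^+ 2 * dotp x x + 2 * s * t * dotp x y + t ^+ 2 * dotp y y.
Proof. by rewrite dotp_comb2l !dotp_comb2r (dotpC y x); ring. Qed.

Lemma dotp_ge0 x : 0 <= dotp x x.
Proof. by apply: sumr_ge0 => i _; rewrite -expr2 sqr_ge0. Qed.

Lemma dotp_eq0 x : dotp x x = 0 -> forall i, x i = 0.
Proof.
move=> xx0 i; have sq_ge0 (j : 'I_d.+1) : true -> 0 <= x j * x j.
  by rewrite -expr2 sqr_ge0.
move/eqP: (psumr_eq0P sq_ge0 xx0 (i := i) isT).
by rewrite mulf_eq0 orbb => /eqP.
Qed.

Lemma dotp0l x y : (forall i, x i = 0) -> dotp x y = 0.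
Proof. by move=> x0; rewrite /dotp big1 // => i _; rewrite x0 mul0r. Qed.

Lemma dotp_gt0 c : (exists i, c i <> 0) -> 0 < dotp c c.
Proof.
move=> [i ci_neq0]; rewrite lt_def dotp_ge0 andbT.
by apply/eqP => /dotp_eq0 /(_ i).
Qed.

Definition gram a c := dotp a a * dotp c c - dotp a c ^+ 2.

(* If [gram a c > 0], the affine subspace {a.x = b, c.x = b'} has squared
   distance [slice_norm a b c b' / gram a c] from the origin. *)
Definition slice_norm a b c (b' : R) :=
  b ^+ 2 * dotp c c - 2 * b * b' * dotp a c + b' ^+ 2 * dotp a a.

Definition meet_disc a b c (b' : R) := slice_norm a b c b' - gram a c.

Lemma dotp_gram_comb a c :
  dotp (comb2 (dotp c c) a (- dotp a c) c) (comb2 (dotp c c) a (- dotp a c) c)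
  = dotp c c * gram a c.
Proof. by rewrite dotp_comb2 /gram; ring. Qed.

Lemma gram_ge0 a c : 0 <= gram a c.
Proof.
have [cc0|cc_neq0] := eqVneq (dotp c c) 0; last first.
  have cc_gt0 : 0 < dotp c c by rewrite lt_def cc_neq0 dotp_ge0.
  by rewrite -(pmulr_rge0 _ cc_gt0) -dotp_gram_comb dotp_ge0.
have ac0 : dotp a c = 0 by rewrite dotpC dotp0l //; exact: dotp_eq0.
by rewrite /gram cc0 ac0 mulr0 expr0n subr0.
Qed.

Lemma gram_eq0_dependent a c y : 0 < dotp c c -> gram a c = 0 ->
  dotp c c * dotp a y = dotp a c * dotp c y.
Proof.
move=> cc_gt0 gram0; apply/eqP; rewrite -subr_eq0.
have q0 : forall i, comb2 (dotp c c) a (- dotp a c) c i = 0.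
  by apply: dotp_eq0; rewrite dotp_gram_comb gram0 mulr0.
by rewrite -(dotp0l y q0) dotp_comb2l mulNr.
Qed.

Lemma slice_norm_decomp a b c (b' : R) :
  dotp c c * slice_norm a b c b' =
  (dotp c c * b - dotp a c * b') ^+ 2 + b' ^+ 2 * gram a c.
Proof. by rewrite /slice_norm /gram; ring. Qed.

Lemma slice_norm_le a b c (b' : R) x : 0 < dotp c c ->
  dotp a x = b -> dotp c x = b' -> slice_norm a b c b' <= gram a c * dotp x x.
Proof.
move=> cc_gt0 ax cx.
have [gram0|gram_neq0] := eqVneq (gram a c) 0.
  have := slice_norm_decomp a b c b'.
  rewrite gram0 mulr0 addr0 -ax -cx gram_eq0_dependent // subrr expr0n /=.
  by move/eqP; rewrite mulf_eq0 gt_eqF //= => /eqP->; rewrite mul0r.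
have gram_gt0 : 0 < gram a c by rewrite lt_def gram_neq0 gram_ge0.
pose p := comb2 (dotp c c * b - dotp a c * b') a
               (dotp a a * b' - dotp a c * b) c.
pose u := comb2 (gram a c) x (-1) p.
have uu : dotp u u = gram a c * (gram a c * dotp x x - slice_norm a b c b').
  rewrite /u dotp_comb2 /p dotp_comb2r dotp_comb2 (dotpC x a) (dotpC x c) ax cx.
  by rewrite /gram /slice_norm; ring.
rewrite -subr_ge0 -(pmulr_rge0 _ gram_gt0) -uu; exact: dotp_ge0.
Qed.

Lemma slice_norm_attained a b c (b' : R) : 0 < gram a c ->
  exists x, [/\ dotp a x = b, dotp c x = b'
             & gram a c * dotp x x = slice_norm a b c b'].
Proof.
move=> /lt0r_neq0; rewrite /gram => gram_neq0.
exists (comb2 ((dotp c c * b - dotp a c * b') / gram a c) a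
              ((dotp a a * b' - dotp a c * b) / gram a c) c).
rewrite dotp_comb2 !dotp_comb2r (dotpC c a) /gram /slice_norm.
by split; field.
Qed.

Lemma slices_meet_disk a b c (b' : R) : (exists i, c i <> 0) ->
  (exists x, dotp x x < 1 /\ dotp c x = b') ->
  (exists x, [/\ in_disk x, dotp a x = b & dotp c x = b']) <->
  meet_disc a b c b' <= 0.
Proof.
move=> /dotp_gt0 cc_gt0 [x0 [x0x0 cx0]]; rewrite /meet_disc subr_le0; split.
  move=> [x [xx_le1 ax cx]]; apply: le_trans (slice_norm_le cc_gt0 ax cx) _.
  by rewrite ler_piMr ?gram_ge0.
move=> norm_le; have [gram0|gram_neq0] := eqVneq (gram a c) 0.
  have ab : dotp c c * b = dotp a c * b'.
    have := slice_norm_decomp a b c b'; rewrite gram0 mulr0 addr0 => def_sq.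
    have sq0 : (dotp c c * b - dotp a c * b') ^+ 2 = 0.
      by apply/le_anti; rewrite sqr_ge0 andbT -def_sq pmulr_rle0 // -gram0.
    by move/eqP: sq0; rewrite sqrf_eq0 subr_eq0 => /eqP.
  exists x0; split=> //; first exact: ltW.
  by apply: (mulfI (lt0r_neq0 cc_gt0)); rewrite gram_eq0_dependent // cx0 ab.
have gram_gt0 : 0 < gram a c by rewrite lt_def gram_neq0 gram_ge0.
have [x [ax cx xx]] := slice_norm_attained b b' gram_gt0.
by exists x; split=> //; rewrite /in_disk -(ler_pM2l gram_gt0) mulr1 xx.
Qed.

Definition feature_index := ((bool + 'I_d.+1) + 'I_d.+1 * 'I_d.+1)%type.

Definition featL a b (t : feature_index) :=
  match t with
  | inl (inl true) => b ^+ 2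
  | inl (inl false) => dotp a a
  | inl (inr i) => - 2 * b * a i
  | inr (i, j) => a i * a j
  end.

Definition featR c (b' : R) (t : feature_index) :=
  match t with
  | inl (inl true) => dotp c c
  | inl (inl false) => b' ^+ 2 - dotp c c
  | inl (inr i) => b' * c i
  | inr (i, j) => c i * c j
  end.

Lemma meet_disc_features a b c (b' : R) :
  meet_disc a b c b' = \sum_(t : feature_index) featL a b t * featR c b' t.
Proof.
rewrite !big_sumType big_bool /=.
have -> : \sum_(i < d.+1) (- 2 * b * a i) * (b' * c i)
        = - 2 * b * b' * dotp a c.
  by rewrite /dotp mulr_sumr; apply: eq_bigr => i _; ring.
have -> : \sum_(p : 'I_d.+1 * 'I_d.+1) featL a b (inr p) * featR c b' (inr p)
        = dotp a c ^+ 2.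
  rewrite expr2 /dotp big_distrlr pair_bigA /=.
  by apply: eq_bigr => -[i j] _ /=; ring.
by rewrite /meet_disc /slice_norm /gram /=; ring.
Qed.

End Slices.

Definition incidence k : rel ('I_k + {set 'I_k}) := fun u v =>
  match u, v with
  | inl i, inr X | inr X, inl i => i \in X
  | _, _ => false
  end.
Arguments incidence : clear implicits.

Lemma incidence_sym (k : nat) : symmetric (incidence k).
Proof. by move=> [i|X] [j|Y]. Qed.

Lemma incidence_irr (k : nat) : irreflexive (incidence k).
Proof. by move=> [i|X]. Qed.

Lemma sphere_incidence_meet_disc (d k : nat) : sphere_graph d (incidence k) ->
  exists (a : 'I_k -> point d) (b : 'I_k -> R)
         (c : {set 'I_k} -> point d) (b' : {set 'I_k} -> R),
    forall i (X : {set 'I_k}),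
      (i \in X) = (meet_disc (a i) (b i) (c X) (b' X) <= 0).
Proof.
move=> [f [f_Hd [_ f_edge]]].
have /fin_all_exists [ab ab_slice] : forall v, exists ab : point d * R,
    [/\ exists i, ab.1 i <> 0, exists x, dotp x x < 1 /\ dotp ab.1 x = ab.2
      & forall x, f v x <-> in_disk x /\ dotp ab.1 x = ab.2].
  by move=> v; have [a [b [? [? ?]]]] := f_Hd v; exists (a, b).
exists (fun i => (ab (inl i)).1), (fun i => (ab (inl i)).2).
exists (fun X => (ab (inr X)).1), (fun X => (ab (inr X)).2) => i X.
have [_ _ fi] := ab_slice (inl i); have [c_neq0 c_int fX] := ab_slice (inr X).
have [edge_meet meet_edge] := f_edge (inl i) (inr X) isT.
apply/idP/idP; rewrite -(slices_meet_disk _ _ c_neq0 c_int).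
  by move/edge_meet => [x [/fi [x_disk ax] /fX [_ cx]]]; exists x.
move=> [x [x_disk ax cx]]; apply: meet_edge.
by exists x; split; [apply/fi | apply/fX].
Qed.

(* The argument works for every d. *)
Theorem mainTheorem4 (d : nat) (hd : (1 <= d)%N) :
  exists (V : finType) (e : rel V),
    symmetric e /\ irreflexive e /\ ~ sphere_graph d e.
Proof.
exists _, (incidence #|{: feature_index d}|.+1).
split; [exact: incidence_sym | split; first exact: incidence_irr].
move=> /sphere_incidence_meet_disc [a [b [c [b' meetP]]]].
pose U : 'M_(_, #|{: feature_index d}|) :=
  \matrix_(i, j) featL (a i) (b i) (enum_val j).
have [X not_pattern] := halfspaces_not_shattering U (ltnSn _).
apply: (not_pattern (\col_j featR (c X) (b' X) (enum_val j))) => i.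
rewrite meetP meet_disc_features (big_enum_val (A := predT)) mxE.
by congr (_ <= 0); apply: eq_bigr => j _; rewrite !mxE.
Qed.
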